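(* Let $n\geq 1$, let $A\subseteq \mathbb{Z}^n$, and suppose $\dim \mathrm{Nb}(A)=d$ for some $d\in\mathbb{N}$. Then $\mathrm{Nb}(A)$ is locally finite; equivalently, every $a\in A$ has only finitely many $A$-neighbors.
   Context: For $a,b\in\mathbb{R}^n$, write $a \ll b$ if $\pi_i(a)<\pi_i(b)$ for all $i=1,\dots,n$, where $\pi_i$ is the $i$-th coordinate. For $B\subseteq\mathbb{R}^n$, $\vee B$ denotes the coordinatewise supremum in $(\mathbb{R}\cup\{\pm\infty\})^n$, i.e. $\pi_i(\vee B)=\sup\{\pi_i(b)\mid b\in B\}$. For $A\subseteq\mathbb{R}^n$, the neighbor complex $\mathrm{Nb}(A)$ is the set of all subsets $B\subseteq A$ such that there is no $a\in A$ with $a\ll \vee B$; it is an abstract simplicial complex on the vertex set $A$. Two points $a,a'\in A$ are called $A$-neighbors if $\{a,a'\}\in\mathrm{Nb}(A)$. For $B\in\mathrm{Nb}(A)$, $\dim B:=\mathrm{card}(B)-1$. We say $\dim\mathrm{Nb}(A)=d$ if $\dim B\leq d$ for all $B\in\mathrm{Nb}(A)$ and $\dim B=d$ for at least one $B\in\mathrm{Nb}(A)$. A simplicial complex is locally finite if each vertex is contained in only finitely many simplices. *)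

From HB Require Import structures.
From mathcomp Require Import all_boot all_order all_algebra.
Set Implicit Arguments. Unset Strict Implicit. Unset Printing Implicit Defensive.
Import Order.TTheory GRing.Theory Num.Theory.
Local Open Scope ring_scope.

Definition point (n : nat) := {ffun 'I_n -> int}.

(* Extended integers for the coordinatewise supremum of a FINITE set:
   None = -infinity (supremum of the empty set), Some m = m. *)
Definition vee (n : nat) (B : seq (point n)) (i : 'I_n) : option int :=
  foldr (fun (b : point n) (acc : option int) => Some (match acc with
                            | None => b i
                            | Some m => Num.max (b i) m end)) None B.

Definition ll (n : nat) (a : point n) (x : 'I_n -> option int) : Prop :=
  forall i : 'I_n, match x i with Some m => is_true (a i < m) | None => False end.

(* B (a finite subset of A, represented by a duplicate-free list) is a
   simplex of the neighbor complex Nb(A). *)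
Definition inNb (n : nat) (A : point n -> Prop) (B : seq (point n)) : Prop :=
  uniq B /\ (forall b, b \in B -> A b) /\ ~ (exists a, A a /\ ll a (vee B)).

(* dim Nb(A) = d  (dim B = card B - 1). *)
Definition dimNb (n : nat) (A : point n -> Prop) (d : nat) : Prop :=
  (forall B, inNb A B -> (size B <= d.+1)%N) /\
  (exists B, inNb A B /\ size B = d.+1).

Definition Aneighbor (n : nat) (A : point n -> Prop) (a a' : point n) : Prop :=
  inNb A (undup [:: a; a']).

(* Nb(A) is locally finite: each vertex lies in finitely many simplices
   (simplices as sets, i.e. lists up to permutation). *)
Definition locally_finite (n : nat) (A : point n -> Prop) : Prop :=
  forall a, A a -> exists S : seq (seq (point n)),
    forall B, inNb A B -> a \in B -> exists2 B', B' \in S & perm_eq B B'.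

Definition finitely_many_neighbors (n : nat) (A : point n -> Prop) : Prop :=
  forall a, A a -> exists s : seq (point n), forall a', Aneighbor A a a' -> a' \in s.

From HB Require Import structures.
From mathcomp Require Import all_boot all_order all_algebra.
From Stdlib Require Import Classical ClassicalEpsilon.
Set Implicit Arguments. Unset Strict Implicit. Unset Printing Implicit Defensive.
Import Order.TTheory GRing.Theory Num.Theory.

(* If a had infinitely many A-neighbors b_0, b_1, ..., Dickson's lemma applied
   to the vectors max(b_k, a) - a of N^n would yield d + 2 of them whose
   coordinatewise maxima with a increase along the list.  Any point strictly
   below the supremum of these d + 2 points is then strictly below that of
   {a, b_last} in every coordinate, so they span a simplex of dimension d + 1,
   contradicting dim Nb(A) = d.  Local finiteness follows because every simplex
   containing a consists of A-neighbors of a. *)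

Lemma ex_minimal_nat (P : nat -> Prop) v :
  P v -> exists2 w, P w & forall u, P u -> (w <= u)%N.
Proof.
elim/ltn_ind: v => v IH Pv.
have [[u [Pu ltuv]] | nolt] := classic (exists u, P u /\ (u < v)%N).
  exact: IH ltuv Pu.
exists v => // u Pu; rewrite leqNgt; apply/negP => ltuv; apply: nolt; by exists u.
Qed.

Lemma nondecreasing_subsequence (h : nat -> nat) :
  exists phi : nat -> nat,
    {homo phi : j k / (j < k)%N} /\ {homo h \o phi : j k / (j <= k)%N}.
Proof.
have tail_argmin k : exists j, (k <= j)%N /\ forall j', (k <= j')%N -> (h j <= h j')%N.
  have [v [j [kj <-]] minv] := @ex_minimal_nat
    (fun v => exists j, (k <= j)%N /\ h j = v) (h k) (ex_intro _ k (conj (leqnn k) erefl)).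
  by exists j; split => // j' kj'; apply: minv; exists j'.
pose sel k := proj1_sig (constructive_indefinite_description _ (tail_argmin k)).
have selP k : (k <= sel k)%N /\ forall j', (k <= j')%N -> (h (sel k) <= h j')%N :=
  proj2_sig (constructive_indefinite_description _ (tail_argmin k)).
pose phi j := iter j (fun p => sel p.+1) (sel 0).
have phi_lt_succ j : (phi j < phi j.+1)%N by exact: (selP _).1.
have phi_incr : {homo phi : j k / (j < k)%N} by exact: homo_ltn ltn_trans _.
exists phi; split => // j k /(ltnW_homo phi_incr) le_jk /=.
case: j le_jk => [|j] le_jk; first exact: (selP 0).2.
by apply: (selP _).2; apply: leq_trans le_jk; exact: (selP _).1.
Qed.

Lemma dickson (I : finType) (F : nat -> I -> nat) :
  exists phi : nat -> nat, {homo phi : j k / (j < k)%N} /\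
    forall i, {homo (fun k => F (phi k) i) : j k / (j <= k)%N}.
Proof.
suff [phi [phi_incr Fmono]] : exists phi : nat -> nat, {homo phi : j k / (j < k)%N} /\
    forall i, i \in enum I -> {homo (fun k => F (phi k) i) : j k / (j <= k)%N}.
  by exists phi; split => // i; apply: Fmono; rewrite mem_enum.
elim: (enum I) => [|i0 s [phi [phi_incr Fmono]]]; first by exists id; split.
have [psi [psi_incr Fi0mono]] := nondecreasing_subsequence (fun k => F (phi k) i0).
exists (phi \o psi); split => [j k jk | i]; first exact/phi_incr/psi_incr.
rewrite in_cons => /predU1P [-> // | si] j k /(ltnW_homo psi_incr).
exact: Fmono.
Qed.

Lemma injective_sequence_of_infinite (T : eqType) (P : T -> Prop) :
  (forall s : seq T, exists x, P x /\ x \notin s) ->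
  exists g : nat -> T, injective g /\ forall k, P (g k).
Proof.
move=> Pinf.
pose c s := proj1_sig (constructive_indefinite_description _ (Pinf s)).
have cP s : P (c s) /\ c s \notin s :=
  proj2_sig (constructive_indefinite_description _ (Pinf s)).
pose L k := iter k (fun s => c s :: s) [::].
have c_in_L j k : (j < k)%N -> c (L j) \in L k.
  elim: k => // k IH; rewrite ltnS leq_eqVlt => /predU1P [-> | /IH cLj].
    exact: mem_head.
  by rewrite /= in_cons cLj orbT.
have fresh j k : (j < k)%N -> c (L j) != c (L k).
  move=> /(c_in_L j k) cLj; apply/eqP => E; have := (cP (L k)).2; by rewrite -E cLj.
exists (c \o L); split => [j k /= E | k]; last exact: (cP _).1.
by case: (ltngtP j k) => // /fresh; rewrite E eqxx.
Qed.

Local Open Scope ring_scope.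

Lemma vee_ltP n (B : seq (point n)) (x : point n) i :
  (match vee B i with Some m => x i < m | None => False end) <->
  exists2 b, b \in B & x i < b i.
Proof.
elim: B => [|b B IH]; first by split => //; case.
rewrite [vee _ i]/=; move: IH; case: (vee B i) => [m|] IH; last first.
  split=> [lt_xb | [b']]; first by exists b; rewrite ?mem_head.
  rewrite in_cons => /predU1P [-> // | Bb' lt_xb'].
  by exfalso; apply/IH; exists b'.
rewrite lt_max; split.
  case/orP => [lt_xb | /IH [b' Bb' lt_xb']]; first by exists b; rewrite ?mem_head.
  by exists b' => //; rewrite in_cons Bb' orbT.
case=> b'; rewrite in_cons => /predU1P [-> -> // | Bb' lt_xb'].
by apply/orP; right; apply/IH; exists b'.
Qed.

Lemma ll_veeP n (B : seq (point n)) (x : point n) :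
  ll x (vee B) <-> forall i, exists2 b, b \in B & x i < b i.
Proof. by split=> llx i; apply/vee_ltP; apply: llx. Qed.

Lemma le_max_absz (x y c : int) :
  (`|Num.max x c - c| <= `|Num.max y c - c|)%N -> Num.max x c <= Num.max y c.
Proof.
have ge0 z : 0 <= Num.max z c - c by rewrite subr_ge0 le_max lexx orbT.
by rewrite -lez_nat !gez0_abs ?ge0 // lerD2r.
Qed.

Section NeighborComplex.
Variables (n : nat) (A : point n -> Prop).

Lemma inNb_subset (B B' : seq (point n)) :
  inNb A B -> uniq B' -> {subset B' <= B} -> inNb A B'.
Proof.
move=> [_ [BA noB]] uB' B'B; split; [by [] | split => [b /B'B/BA // |]].
move=> [x [Ax /ll_veeP llx]]; apply: noB; exists x; split => //.
by apply/ll_veeP => i; have [b /B'B] := llx i; exists b.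
Qed.

Lemma Aneighbor_of_simplex (B : seq (point n)) a b :
  inNb A B -> a \in B -> b \in B -> Aneighbor A a b.
Proof.
move=> simplexB aB bB; apply: inNb_subset simplexB (undup_uniq _) _.
by move=> x; rewrite mem_undup !inE => /orP [] /eqP ->.
Qed.

Lemma inNb_dominated a c (B : seq (point n)) :
  Aneighbor A a c -> uniq B -> (forall b, b \in B -> A b) ->
  (forall b i, b \in B -> Num.max (b i) (a i) <= Num.max (c i) (a i)) ->
  inNb A B.
Proof.
move=> [_ [_ noac]] uB BA dom; split=> //; split=> // -[x [Ax /ll_veeP llx]].
apply: noac; exists x; split=> //; apply/ll_veeP => i.
have [b Bb lt_xb] := llx i.
have : x i < Num.max (c i) (a i).
  by apply: lt_le_trans (dom b i Bb); rewrite lt_max lt_xb.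
by rewrite lt_max => /orP [lt_xc | lt_xa]; [exists c | exists a];
  rewrite // mem_undup !inE eqxx ?orbT.
Qed.

Lemma finitely_many_neighbors_of_bounded_simplices d :
  (forall B, inNb A B -> (size B <= d.+1)%N) -> finitely_many_neighbors A.
Proof.
move=> dimB a Aa; apply: NNPP => finN.
have infN (s : seq (point n)) : exists a', Aneighbor A a a' /\ a' \notin s.
  apply: NNPP => finNs; apply: finN; exists s => a' Naa'.
  by apply: NNPP => /negP a'_notin_s; apply: finNs; exists a'.
have [g [g_inj Ng]] := injective_sequence_of_infinite infN.
have [phi [phi_incr mono]] :=
  dickson (fun k i => `|Num.max (g k i) (a i) - a i|%N).
pose B := [seq g (phi k) | k <- iota 0 d.+2].
suff /dimB : inNb A B by rewrite size_map size_iota ltnn.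
apply: (inNb_dominated (Ng (phi d.+1))).
- by rewrite map_inj_uniq ?iota_uniq // => j k /g_inj/(incn_inj (leq_mono phi_incr)).
- move=> _ /mapP [k _ ->]; have [_ [NA _]] := Ng (phi k).
  by apply: NA; rewrite mem_undup !inE eqxx orbT.
- move=> _ i /mapP [k + ->]; rewrite mem_iota add0n ltnS => le_k.
  exact/le_max_absz/mono.
Qed.

Lemma locally_finite_of_finitely_many_neighbors :
  finitely_many_neighbors A -> locally_finite A.
Proof.
move=> finN a Aa; have [s Ns] := finN a Aa; pose r := undup (a :: s).
exists [seq mask (val m) r | m : (size r).-tuple bool] => B simplexB aB.
exists [seq x <- r | x \in B].
  rewrite filter_mask; apply/mapP; exists (map_tuple (mem B) (in_tuple r)) => //.
  by rewrite mem_enum.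
apply: uniq_perm; [exact: simplexB.1 | by rewrite filter_uniq ?undup_uniq |].
move=> x; rewrite mem_filter; case Bx: (x \in B) => //=.
by rewrite mem_undup in_cons (Ns x (Aneighbor_of_simplex simplexB aB Bx)) orbT.
Qed.

End NeighborComplex.

Theorem mainTheorem1 (n : nat) (A : point n -> Prop) (d : nat) :
  (1 <= n)%N -> dimNb A d ->
  locally_finite A /\ finitely_many_neighbors A.
Proof.
move=> _ [dimB _].
have finN := finitely_many_neighbors_of_bounded_simplices dimB.
by split; first exact: locally_finite_of_finitely_many_neighbors.
Qed.
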